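(* For every formula $A$, the context $\psi(A)$ is irreducible and is a maximal decomposition of $A$: the sequent $\psi(A)\vdash A$ is derivable, and for every irreducible context $\Theta$ such that $\Theta\vdash A$ is derivable, $\Theta\le\psi(A)$ in the substitution order.
   Context: Formulas are built from atoms ($p,q,\dots$) by a binary product: every formula is an atom or $A\bullet B$. A context is a finite (possibly empty) list of formulas; commas denote concatenation; a context is irreducible if its leftmost formula is not a product. $\psi$ is defined inductively by $\psi(p)=p$ for atoms and $\psi(A\bullet B)=\psi(A),B$. The sequent calculus has exactly four rules (no weakening, contraction or exchange): ($\bullet L$) from $A,B,\Delta\vdash C$ infer $A\bullet B,\Delta\vdash C$ (the product must be leftmost); ($\bullet R$) from $\Gamma\vdash A$ and $\Delta\vdash B$ infer $\Gamma,\Delta\vdash A\bullet B$; ($id$) $A\vdash A$; ($cut$) from $\Theta\vdash A$ and $\Gamma,A,\Delta\vdash B$ infer $\Gamma,\Theta,\Delta\vdash B$; derivable means conclusion of a finite derivation tree with no undischarged premises. The substitution order on contexts is the least relation $\le$ such that: (1) if $\Gamma\vdash A$ is derivable then $\Gamma\le A$ (one-element context); (2) $\cdot\le\cdot$ for the empty context; (3) if $\Gamma_1\le\Gamma_2$ and $\Theta_1\le\Theta_2$ then $(\Gamma_1,\Theta_1)\le(\Gamma_2,\Theta_2)$. *)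

From Stdlib Require Import List.
Import ListNotations.

Inductive formula : Type :=
| atom : nat -> formula
| prod : formula -> formula -> formula.

(* Contexts: finite lists of formulas; comma = concatenation (++). *)
Definition context := list formula.

Definition irreducible (G : context) : Prop :=
  match G with
  | [] => True
  | A :: _ => forall B C, A <> prod B C
  end.

Fixpoint psi (A : formula) : context :=
  match A with
  | atom p => [atom p]
  | prod B C => psi B ++ [C]
  end.

Inductive derivable : context -> formula -> Prop :=
| d_prodL : forall A B D C,
    derivable (A :: B :: D) C -> derivable (prod A B :: D) C
| d_prodR : forall G D A B,
    derivable G A -> derivable D B -> derivable (G ++ D) (prod A B)
| d_id : forall A, derivable [A] A
| d_cut : forall T A G D B,
    derivable T A -> derivable (G ++ A :: D) B -> derivable (G ++ T ++ D) B.

Inductive sub_le : context -> context -> Prop :=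
| sl_seq : forall G A, derivable G A -> sub_le G [A]
| sl_nil : sub_le [] []
| sl_app : forall G1 G2 T1 T2,
    sub_le G1 G2 -> sub_le T1 T2 -> sub_le (G1 ++ T1) (G2 ++ T2).

(** Cut is admissible: every derivable sequent has a derivation using only
    (•L), (•R) and (id).  In a cut-free derivation of [Θ ⊢ A • B] with [Θ]
    irreducible the last rule can only be (•R), which splits [Θ] as
    [Γ, Δ] with [Γ ⊢ A] and [Δ ⊢ B]; [Γ] is nonempty, hence irreducible,
    so induction on [A] gives [Γ ≤ ψ(A)] and [Δ ≤ B] gives
    [Θ ≤ ψ(A), B = ψ(A • B)]. *)

From Stdlib Require Import List.
Import ListNotations.

Lemma app_eq_app_cons {X : Type} (G1 D1 G D : list X) (a : X) :
  G1 ++ D1 = G ++ a :: D ->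
  (exists l, G = G1 ++ l /\ D1 = l ++ a :: D) \/
  (exists l, G1 = G ++ a :: l /\ D = l ++ D1).
Proof.
  intros E.
  destruct (app_eq_app _ _ _ _ E) as [l [[E1 E2] | [E1 E2]]].
  - destruct l as [| b l].
    + left. exists []. rewrite app_nil_r in *. subst. auto.
    + right. injection E2 as <- ->. exists l. auto.
  - left. exists l. auto.
Qed.

Inductive cutfree : context -> formula -> Prop :=
| cutfree_prodL : forall A B D C,
    cutfree (A :: B :: D) C -> cutfree (prod A B :: D) C
| cutfree_prodR : forall G D A B,
    cutfree G A -> cutfree D B -> cutfree (G ++ D) (prod A B)
| cutfree_id : forall A, cutfree [A] A.

Lemma cutfree_derivable G A : cutfree G A -> derivable G A.
Proof. induction 1; econstructor; eauto. Qed.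

Lemma cutfree_nonempty G A : cutfree G A -> G <> [].
Proof.
  induction 1; try discriminate.
  destruct G; [contradiction | discriminate].
Qed.

Definition cut_admissible (A : formula) : Prop :=
  forall T G D B, cutfree T A -> cutfree (G ++ A :: D) B -> cutfree (G ++ T ++ D) B.

(* The principal case: the cut formula [X • Y] is introduced by (•L) on the right. *)
Definition prodL_cut_admissible (X Y : formula) : Prop :=
  forall T D B, cutfree T (prod X Y) -> cutfree (X :: Y :: D) B -> cutfree (T ++ D) B.

Lemma prodL_cut_admissible_intro X Y :
  cut_admissible X -> cut_admissible Y -> prodL_cut_admissible X Y.
Proof.
  intros cutX cutY T D B HT.
  remember (prod X Y) as F eqn:EF.
  revert D B. induction HT as [A' B' D' C' _ IH | G' D' X' Y' HX _ HY _ | F];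
    intros D B HB.
  - apply cutfree_prodL. exact (IH EF D B HB).
  - injection EF as -> ->.
    assert (HXD : cutfree (X :: D' ++ D) B) by exact (cutY D' [X] D B HY HB).
    rewrite <- app_assoc. exact (cutX G' [] (D' ++ D) B HX HXD).
  - subst F. apply cutfree_prodL. exact HB.
Qed.

Lemma cut_admissible_intro A :
  (forall X Y, A = prod X Y -> prodL_cut_admissible X Y) -> cut_admissible A.
Proof.
  intros principal T G D B HT HB.
  remember (G ++ A :: D) as Γ eqn:EΓ.
  revert G D EΓ.
  induction HB as [A' B' D' C' HB IH | G1 D1 X Y HX IH1 HY IH2 | C]; intros G D EΓ.
  - destruct G as [| Z G]; injection EΓ as EZ ED.
    + subst. exact (principal A' B' eq_refl T D C' HT HB).
    + subst. exact (cutfree_prodL _ _ _ _ (IH (A' :: B' :: G) D eq_refl)).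
  - destruct (app_eq_app_cons _ _ _ _ _ EΓ) as [[l [-> ->]] | [l [-> ->]]].
    + rewrite <- app_assoc. apply cutfree_prodR; [assumption | exact (IH2 l D eq_refl)].
    + replace (G ++ T ++ l ++ D1) with ((G ++ T ++ l) ++ D1)
        by (rewrite <- !app_assoc; reflexivity).
      apply cutfree_prodR; [exact (IH1 G l eq_refl) | assumption].
  - destruct G as [| Z [| ? ?]]; injection EΓ as -> ED; try discriminate.
    subst. rewrite app_nil_r. exact HT.
Qed.

Lemma cut_admissible_all A : cut_admissible A.
Proof.
  induction A as [p | X cutX Y cutY]; apply cut_admissible_intro; intros X' Y' E.
  - discriminate.
  - injection E as <- <-. exact (prodL_cut_admissible_intro X Y cutX cutY).
Qed.

Lemma derivable_cutfree G A : derivable G A -> cutfree G A.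
Proof.
  induction 1.
  - apply cutfree_prodL; assumption.
  - apply cutfree_prodR; assumption.
  - apply cutfree_id.
  - exact (cut_admissible_all A T G D B IHderivable1 IHderivable2).
Qed.

Lemma cutfree_prod_inv Θ A B :
  irreducible Θ -> cutfree Θ (prod A B) ->
  exists G D, Θ = G ++ D /\ cutfree G A /\ cutfree D B.
Proof.
  intros irrΘ H. inversion H; subst.
  - exfalso. exact (irrΘ _ _ eq_refl).
  - eauto.
  - exfalso. exact (irrΘ _ _ eq_refl).
Qed.

Lemma irreducible_app_l G D : G <> [] -> irreducible (G ++ D) -> irreducible G.
Proof. destruct G; [contradiction | trivial]. Qed.

Lemma psi_head A : exists p rest, psi A = atom p :: rest.
Proof.
  induction A as [p | B [p [rest Hpsi]] C _].
  - exists p, []. reflexivity.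
  - exists p, (rest ++ [C]). simpl. rewrite Hpsi. reflexivity.
Qed.

Lemma irreducible_psi A : irreducible (psi A).
Proof. destruct (psi_head A) as [p [rest ->]]. intros B C. discriminate. Qed.

Lemma derivable_psi A : derivable (psi A) A.
Proof.
  induction A as [p | B IHB C _].
  - apply d_id.
  - exact (d_prodR _ _ _ _ IHB (d_id C)).
Qed.

Lemma sub_le_psi A Θ : irreducible Θ -> derivable Θ A -> sub_le Θ (psi A).
Proof.
  revert Θ. induction A as [p | B IHB C _]; intros Θ irrΘ HΘ.
  - exact (sl_seq _ _ HΘ).
  - destruct (cutfree_prod_inv Θ B C irrΘ (derivable_cutfree _ _ HΘ))
      as [G [D [-> [HG HD]]]].
    apply sl_app.
    + apply IHB.
      * exact (irreducible_app_l G D (cutfree_nonempty _ _ HG) irrΘ).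
      * exact (cutfree_derivable _ _ HG).
    + exact (sl_seq _ _ (cutfree_derivable _ _ HD)).
Qed.

Theorem proposition2p5 (A : formula) :
  irreducible (psi A) /\
  derivable (psi A) A /\
  (forall Theta : context,
      irreducible Theta -> derivable Theta A -> sub_le Theta (psi A)).
Proof.
  split; [| split].
  - apply irreducible_psi.
  - apply derivable_psi.
  - intros Theta. apply sub_le_psi.
Qed.
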